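(* For the branching-within-branching process described in the context and its associated branching process in random environment $(Z_n')_{n\ge0}$, for all $n,k,z\in\mathbb{N}_0$, $$\mathbb{P}_z(Z_n'=k)=\nu^{-n}\,\mathbb{E}_z\mathcal{T}_{n,k}\quad\text{and}\quad \mathbb{P}_z(Z_n'>0)=\nu^{-n}\,\mathbb{E}_z\mathcal{T}_n^*.$$
   Context: Branching-within-branching process (BwBP): Let $\mathbb{V}$ be the Ulam-Harris tree with root $\varnothing$. Let $(N_\mathsf{v})_{\mathsf{v}\in\mathbb{V}}$ be i.i.d. copies of an $\mathbb{N}_0$-valued random variable $N$ with law $(p_k)_{k\ge0}$ and finite mean $\nu=\mathbb{E}N$. The cell tree is the Galton-Watson tree $\mathbb{T}=\bigcup_n\mathbb{T}_n$, $\mathbb{T}_0=\{\varnothing\}$, $\mathbb{T}_n=\{\mathsf{v}_1\dots\mathsf{v}_n:\mathsf{v}_1\dots\mathsf{v}_{n-1}\in\mathbb{T}_{n-1},\ 1\le \mathsf{v}_n\le N_{\mathsf{v}_1\dots\mathsf{v}_{n-1}}\}$. For each $k\in\mathbb{N}$ let $X^{(\bullet,k)}=(X^{(1,k)},\dots,X^{(k,k)})$ be an $\mathbb{N}_0^k$-valued random vector and $X^{(\bullet,k)}_{i,\mathsf{v}}$, $i\in\mathbb{N},\mathsf{v}\in\mathbb{V}$, i.i.d. copies; these families for different $k$ are mutually independent and independent of $(N_\mathsf{v})$; $X^{(j,k)}_{i,\mathsf{v}}:=0$ for $j>k$. Parasite numbers: $Z_\varnothing$ given and $Z_{\mathsf{v}j}=\sum_{i=1}^{Z_\mathsf{v}}X^{(j,N_\mathsf{v})}_{i,\mathsf{v}}$.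 $\mathbb{P}_z$, $\mathbb{E}_z$ denote probability and expectation when the process starts with one cell containing $Z_\varnothing=z$ parasites. $\mathcal{T}_{n,k}$ is the number of cells $\mathsf{v}\in\mathbb{T}_n$ with $Z_\mathsf{v}=k$, and $\mathcal{T}_n^*=\#\{\mathsf{v}\in\mathbb{T}_n:Z_\mathsf{v}>0\}$ is the number of contaminated cells in generation $n$. Put $\mu_{j,k}=\mathbb{E}X^{(j,k)}$, $\gamma=\sum_{k\ge1}p_k\sum_{j=1}^k\mu_{j,k}$. Standing assumptions: $0<\gamma<\infty$; $p_1<1$ and the total number of parasites in generation 1 (starting from one cell with one parasite) is not a.s. equal to $1$; $p_k\,\mathbb{P}(X^{(j,k)}\ge2)>0$ for at least one pair $1\le j\le k$. Associated branching process in random environment (ABPRE): $(Z_n')_{n\ge0}$ is a Galton-Watson process in i.i.d. random environment $\Lambda=(\Lambda_n)_{n\ge0}$ with values in $\{\mathcal{L}(X^{(j,k)}):1\le j\le k<\infty\}$, $\mathbb{P}(\Lambda_0=\mathcal{L}(X^{(j,k)}))=p_k/\nu$, i.e. given $\Lambda$ all individuals of generation $n$ reproduce independently with law $\Lambda_n$; under $\mathbb{P}_z$ it starts with $Z_0'=z$. *)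

From HB Require Import structures.
From mathcomp Require Import all_boot all_order all_algebra.
From mathcomp Require Import all_classical all_reals all_analysis.
Set Implicit Arguments. Unset Strict Implicit. Unset Printing Implicit Defensive.
Import Order.TTheory GRing.Theory Num.Theory.
Local Open Scope classical_set_scope.
Local Open Scope ring_scope.

(* Cells are Ulam-Harris words: sequences of positive integers, [::] = root,
   child j of v is rcons v j. *)
Definition isUH (v : seq nat) : bool := all (fun x => 0 < x)%N v.

Section BwBP.
Context {d : measure_display} {Omega : measurableType d} {R : realType}.
(* N v = number of daughter cells of cell v;
   X k i v = the vector X^{(.,k)}_{i,v}, as a sequence of length k:
   X^{(j,k)}_{i,v} = nth 0 (X k i v) j.-1  (which is 0 for j > k). *)
Variables (N : seq nat -> Omega -> nat) (X : nat -> nat -> seq nat -> Omega -> seq nat).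

Definition Xjk (j k i : nat) (v : seq nat) (w : Omega) : nat := nth 0%N (X k i v w) j.-1.

Fixpoint gen (n : nat) (w : Omega) : seq (seq nat) :=
  match n with
  | 0 => [:: [::]]
  | n'.+1 => flatten [seq [seq rcons v j | j <- iota 1 (N v w)] | v <- gen n' w]
  end.

(* parasite numbers along a word, Z_{vj} = sum_{i=1}^{Z_v} X^{(j,N_v)}_{i,v} *)
Fixpoint Zaux (pre : seq nat) (cnt : nat) (word : seq nat) (w : Omega) : nat :=
  match word with
  | [::] => cnt
  | j :: word' =>
      Zaux (rcons pre j) (\sum_(1 <= i < cnt.+1) Xjk j (N pre w) i pre w)%N word' w
  end.

Definition Zpar (z : nat) (v : seq nat) (w : Omega) : nat := Zaux [::] z v w.

Definition Tnk (z n k : nat) (w : Omega) : nat :=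
  count (fun v => Zpar z v w == k) (gen n w).
Definition Tstar (z n : nat) (w : Omega) : nat :=
  count (fun v => 0 < Zpar z v w)%N (gen n w).
End BwBP.

Fixpoint Zprime {T : Type} (Y : nat -> nat -> T -> nat) (z n : nat) (w : T) : nat :=
  match n with
  | 0 => z
  | n'.+1 => (\sum_(1 <= i < (Zprime Y z n' w).+1) Y n' i w)%N
  end.

Local Open Scope ereal_scope.

Section Model.
Context {d : measure_display} {Omega : measurableType d} {R : realType}.
Variable P : probability Omega R.
Variables (N : seq nat -> Omega -> nat) (X : nat -> nat -> seq nat -> Omega -> seq nat).

(* p_k = P(N = k), with N_root the reference copy of N *)
Definition pk (k : nat) : R := fine (P [set w | N [::] w = k]).

(* law of X^{(j,k)}: P(X^{(j,k)} = y), with X_{1,root} the reference copy *)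
Definition muLaw (j k y : nat) : R := fine (P [set w | Xjk X j k 1 [::] w = y]).

(* The BwBP hypotheses: (N_v)_{v in V} i.i.d.; for each k, X^{(.,k)}_{i,v}
   (i >= 1, v in V) i.i.d. N_0^k-valued vectors; all these families mutually
   independent (for discrete variables: product rule on every finite
   subfamily of point events). *)
Definition bwbp_model : Prop :=
  [/\ (forall v m, isUH v -> measurable [set w | N v w = m]) /\
      (forall k i v s, (0 < i)%N -> isUH v -> measurable [set w | X k i v w = s]),
      (forall k i v w, (0 < i)%N -> isUH v -> size (X k i v w) = k),
      (forall v m, isUH v -> P [set w | N v w = m] = P [set w | N [::] w = m]),
      (forall k i v s, (0 < i)%N -> isUH v ->
          P [set w | X k i v w = s] = P [set w | X k 1 [::] w = s]) &
      (forall (A : seq (seq nat * nat)) (B : seq ((nat * nat * seq nat) * seq nat)),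
          uniq (map fst A) -> uniq (map fst B) ->
          all (fun a => isUH a.1) A ->
          all (fun b => (0 < b.1.1.2)%N && isUH b.1.2) B ->
          P [set w | (all (fun a => N a.1 w == a.2) A &&
                     all (fun b => X b.1.1.1 b.1.1.2 b.1.2 w == b.2) B)]
          = ((\prod_(a <- A) fine (P [set w | N a.1 w = a.2])) *
             (\prod_(b <- B) fine (P [set w | X b.1.1.1 b.1.1.2 b.1.2 w = b.2])))%R%:E)].

Definition has_mean (nu : R) : Prop :=
  \int[P]_w ((N [::] w)%:R)%:E = nu%:E.

Definition gammaE : \bar R :=
  \sum_(1 <= k <oo) ((pk k)%:E *
     \sum_(1 <= j < k.+1) \int[P]_w ((Xjk X j k 1 [::] w)%:R)%:E).

Definition standing_assumptions : Prop :=
  [/\ 0 < gammaE < +oo,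
      (pk 1 < 1)%R,
      P [set w | (\sum_(v <- gen N 1 w) Zpar N X 1 v w)%N = 1%N] < 1 &
      exists j k, [/\ (1 <= j <= k)%N & (0 < pk k * fine (P [set w | (2 <= Xjk X j k 1 [::] w)%N]))%R]].

(* environment Lambda_n encoded as the index pair (j,k) of the law
   L(X^{(j,k)}); P(Lambda_0 = (j,k)) = p_k / nu for 1 <= j <= k *)
Definition envProb (nu : R) (e : nat * nat) : R :=
  if (0 < e.1 <= e.2)%N then (pk e.2 / nu)%R else 0%R.

(* The ABPRE on a probability space P': E n = Lambda_n, Y n i = offspring of
   individual i (i >= 1) of generation n.  (Lambda_n) i.i.d. with law envProb,
   and given Lambda all individuals reproduce independently, individuals of
   generation n with law L(X^{(Lambda_n)}): stated as the joint law of every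
   finite family (Lambda_0..Lambda_{m-1}, Y_{n,i} with n < m). *)
Definition abpre_model (nu : R) {d' : measure_display} {Omega' : measurableType d'}
  (P' : probability Omega' R) (E : nat -> Omega' -> nat * nat)
  (Y : nat -> nat -> Omega' -> nat) : Prop :=
  [/\ (forall n e, measurable [set w | E n w = e]),
      (forall n i y, (0 < i)%N -> measurable [set w | Y n i w = y]) &
      (forall (e : seq (nat * nat)) (S : seq ((nat * nat) * nat)),
          uniq (map fst S) ->
          all (fun s => (s.1.1 < size e)%N && (0 < s.1.2)%N) S ->
          P' [set w | (all (fun n => E n w == nth (0, 0)%N e n) (iota 0 (size e)) &&
                      all (fun s => Y s.1.1 s.1.2 w == s.2) S)]
          = ((\prod_(x <- e) envProb nu x) *
             (\prod_(s <- S) muLaw (nth (0, 0)%N e s.1.1).1 (nth (0, 0)%N e s.1.1).2 s.2))%R%:E)].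
End Model.

From HB Require Import structures.
From mathcomp Require Import all_boot all_order all_algebra.
From mathcomp Require Import all_classical all_reals all_analysis.
From mathcomp Require Import measurable_realfun ring.
Import Order.TTheory GRing.Theory Num.Theory.

(* Both sides are sums over trajectories: a trajectory of length [n] records,
   generation by generation, an environment [(j, k)] and the offspring numbers
   of the parasites present.  Reading a cell of generation [n] along its
   ancestral line gives such a trajectory, different cells giving different
   ones, and by independence the line of a fixed cell realizes a given
   trajectory with probability [prod p_k * prod mu_{j,k}(y)].  Hence
   [E_z T_{n,k}] is the total weight of the trajectories ending with [k]
   parasites.  The ABPRE follows a given trajectory with the same probability
   except that each [p_k] is replaced by [p_k / nu], whence the factor
   [nu^-n]. *)

Local Open Scope classical_set_scope.
Local Open Scope ring_scope.

Section countable_esum.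
Context {R : realType}.
Local Open Scope ereal_scope.

Lemma esum_pickle (U : countType) (S : set U) (f : U -> \bar R) :
  (forall t, S t -> 0 <= f t) ->
  \esum_(t in S) f t = \sum_(n <oo | n \in pickle @` S) oapp f 0 (unpickle n).
Proof.
move=> f0; rewrite nneseries_esum; last first.
  by move=> n; rewrite inE => -[t St <-]; rewrite pickleK /=; exact: f0.
rewrite set_mem_set esum_image; last by move=> x y _ _; exact: (pcan_inj (@pickleK U)).
by apply: eq_esum => t _; rewrite pickleK.
Qed.

Lemma esumZl (U : countType) (S : set U) (f : U -> \bar R) (k : R) :
  (0 <= k)%R -> (forall t, S t -> 0 <= f t) ->
  \esum_(t in S) (k%:E * f t) = k%:E * \esum_(t in S) f t.
Proof.
move=> k0 f0; rewrite !esum_pickle//; last by move=> t St; rewrite mule_ge0// f0.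
rewrite -nneseriesZl; last by move=> n; rewrite inE => -[t St <-]; rewrite pickleK /=; exact: f0.
by apply: eq_eseriesr => n; rewrite inE => -[t St <-]; rewrite pickleK.
Qed.

End countable_esum.

Section countable_measure.
Context {R : realType} {d} {T : measurableType d} (mu : {measure set T -> \bar R}).
Local Open Scope ereal_scope.

Lemma bigcup_pickle (U : countType) (S : set U) (F : U -> set T) :
  \bigcup_(t in S) F t = \bigcup_(n in pickle @` S) oapp F set0 (unpickle n).
Proof.
apply/seteqP; split => w.
  by move=> [t St Ft]; exists (pickle t); [exists t|rewrite pickleK].
by move=> [n [t St <-]]; rewrite pickleK /= => Ft; exists t.
Qed.

Lemma countable_bigcup_measurable (U : countType) (S : set U) (F : U -> set T) :
  (forall t, S t -> measurable (F t)) -> measurable (\bigcup_(t in S) F t).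
Proof.
move=> mF; rewrite bigcup_pickle; apply: bigcup_measurable => n [t St <-].
by rewrite pickleK /=; exact: mF.
Qed.

Lemma countable_measure_bigcup (U : countType) (S : set U) (F : U -> set T) :
  (forall t, S t -> measurable (F t)) ->
  (forall t t' w, S t -> S t' -> F t w -> F t' w -> t = t') ->
  mu (\bigcup_(t in S) F t) = \esum_(t in S) mu (F t).
Proof.
move=> mF dF; rewrite bigcup_pickle measure_bigcup.
- rewrite esum_pickle//; apply: eq_eseriesr => n; rewrite inE => -[t St <-].
  by rewrite pickleK.
- by move=> n [t St <-]; rewrite pickleK /=; exact: mF.
move=> n m [t St <-] [t' St' <-]; rewrite !pickleK /= => -[w [Fw Fw']].
by rewrite (dF _ _ _ St St' Fw Fw').
Qed.

Lemma integral_esum (U : countType) (S : set U) (f : U -> T -> \bar R) :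
  (forall t, S t -> measurable_fun setT (f t)) -> (forall t x, 0 <= f t x) ->
  \int[mu]_x (\esum_(t in S) f t x) = \esum_(t in S) \int[mu]_x f t x.
Proof.
move=> mf f0; under eq_integral do rewrite esum_pickle// eseries_mkcond.
rewrite integral_nneseries//.
- rewrite esum_pickle; last by move=> t _; exact: integral_ge0.
  rewrite [RHS]eseries_mkcond; apply: eq_eseriesr => n _.
  case: ifPn => _; last by rewrite integral0.
  by case: (unpickle n) => //=; rewrite integral0.
- move=> n; have [/set_mem [t St <-]|_] := boolP (n \in pickle @` S).
    by rewrite pickleK /=; exact: mf.
  exact: measurable_cst.
- move=> n x _; case: (n \in pickle @` S) => //; case: (unpickle n) => [t|] //=.
Qed.

Lemma measurable_andb (p q : T -> bool) :
  measurable [set x | p x] -> measurable [set x | q x] -> measurable [set x | p x && q x].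
Proof.
move=> mp mq; rewrite (_ : [set x | _] = [set x | p x] `&` [set x | q x]).
  exact: measurableI.
by apply/seteqP; split => x /= => [/andP[]|[-> ->]].
Qed.

Lemma measurable_all (U : Type) (Q : pred U) (s : seq U) (f : U -> T -> bool) :
  (forall u, Q u -> measurable [set x | f u x]) -> all Q s ->
  measurable [set x | all (fun u => f u x) s].
Proof.
move=> mf; elim: s => [_|u s IH /andP[Qu Qs]] /=.
  by rewrite (_ : [set x | true] = setT) //; apply/seteqP.
exact: measurable_andb (mf u Qu) (IH Qs).
Qed.

End countable_measure.

(* A step [((j, k), ys)]: the environment [(j, k)] of one generation and the
   offspring numbers [ys] of its parasites, in order. *)
Definition traj := seq ((nat * nat) * seq nat).

Fixpoint traj_fits (c : nat) (t : traj) : bool :=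
  if t is x :: t' then (size x.2 == c) && traj_fits (sumn x.2) t' else true.

Fixpoint traj_last (c : nat) (t : traj) : nat :=
  if t is x :: t' then traj_last (sumn x.2) t' else c.

Definition traj_env_ok (t : traj) : bool := all (fun x => 0 < x.1.1 <= x.1.2)%N t.

Definition trajs (Q : pred nat) (z n : nat) : set traj :=
  [set t | [&& size t == n, traj_fits z t & Q (traj_last z t)]].

Definition env_ok_trajs (Q : pred nat) (z n : nat) : set traj :=
  trajs Q z n `&` [set t | traj_env_ok t].

Lemma sum_index_iota1 (F : nat -> nat) c :
  (\sum_(1 <= i < c.+1) F i)%N = sumn [seq F i | i <- iota 1 c].
Proof. by rewrite sumnE big_map /index_iota subn1. Qed.

Lemma eq_map_iota (F : nat -> nat) (ys : seq nat) m :
  ([seq F i | i <- iota m (size ys)] == ys) =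
  all (fun i => F i == nth 0%N ys (i - m)) (iota m (size ys)).
Proof.
elim: ys m => [|y ys IH] m //=.
rewrite eqseq_cons subnn /= IH; congr (_ && _).
apply: eq_in_all => i; rewrite mem_iota => /andP[mi _].
by rewrite -(subnSK mi).
Qed.

Lemma map_nth_iota1 (ys : seq nat) : [seq nth 0%N ys i.-1 | i <- iota 1 (size ys)] = ys.
Proof.
rewrite -[1%N]/(1 + 0)%N iotaDl -map_comp.
by rewrite (eq_map (g := nth 0%N ys)) //; exact: mkseq_nth.
Qed.

Definition traj_word (t : traj) : seq nat := map (fun x => x.1.1) t.

Definition X_index_ok (b : nat * nat * seq nat) : bool := (0 < b.1.2)%N && isUH b.2.

(* The events on the [N]s and on the [X]s expressing that the ancestral line
   below cell [pre] follows [t]. *)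
Fixpoint cell_events (pre : seq nat) (t : traj) : seq (seq nat * nat) :=
  if t is x :: t' then (pre, x.1.2) :: cell_events (rcons pre x.1.1) t' else [::].

Fixpoint vector_events (pre : seq nat) (t : traj) :
    seq ((nat * nat * seq nat) * pred (seq nat)) :=
  if t is x :: t' then
    [seq ((x.1.2, i, pre), fun s : seq nat => nth 0%N s x.1.1.-1 == nth 0%N x.2 i.-1)
    | i <- iota 1 (size x.2)] ++ vector_events (rcons pre x.1.1) t'
  else [::].

Lemma cell_events_size_ge pre t : all (fun a => size pre <= size a.1)%N (cell_events pre t).
Proof.
elim: t pre => [|x t IH] pre //=; rewrite leqnn /=.
by apply: sub_all (IH (rcons pre x.1.1)) => a /=; rewrite size_rcons => /ltnW.
Qed.

Lemma uniq_cell_events pre t : uniq (map fst (cell_events pre t)).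
Proof.
elim: t pre => [|x t IH] pre //=; rewrite IH andbT.
apply/mapP => -[a aA epa].
by have := allP (cell_events_size_ge (rcons pre x.1.1) t) a aA; rewrite -epa size_rcons ltnn.
Qed.

Lemma vector_events_size_ge pre t :
  all (fun c => size pre <= size c.1.2)%N (vector_events pre t).
Proof.
elim: t pre => [|x t IH] pre //=; rewrite all_cat all_map.
apply/andP; split; first by apply/allP => i _ /=.
by apply: sub_all (IH (rcons pre x.1.1)) => a /=; rewrite size_rcons => /ltnW.
Qed.

Lemma uniq_vector_events pre t : uniq (map fst (vector_events pre t)).
Proof.
elim: t pre => [|x t IH] pre //=; rewrite map_cat cat_uniq IH andbT.
rewrite -map_comp map_inj_uniq ?iota_uniq; last by move=> i1 i2 [].
apply/hasPn => b /mapP[c cC ->]; apply/mapP => -[i _ /= ec].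
by have := allP (vector_events_size_ge (rcons pre x.1.1) t) c cC; rewrite ec size_rcons ltnn.
Qed.

Lemma UH_cell_events pre t : isUH pre -> traj_env_ok t ->
  all (fun a => isUH a.1) (cell_events pre t).
Proof.
elim: t pre => [|x t IH] pre //= UHpre /andP[/andP[j0 _] okt]; rewrite UHpre /=.
by apply: IH => //; rewrite /isUH all_rcons j0.
Qed.

Lemma vector_events_index_ok pre t : isUH pre -> traj_env_ok t ->
  all (fun c => X_index_ok c.1) (vector_events pre t).
Proof.
elim: t pre => [|x t IH] pre //= UHpre /andP[/andP[j0 _] okt]; rewrite all_cat all_map.
apply/andP; split.
  by apply/allP => i; rewrite mem_iota /X_index_ok /= UHpre andbT => /andP[].
by apply: IH => //; rewrite /isUH all_rcons j0.
Qed.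

Section cell_lines.
Context {d : measure_display} {T : measurableType d}.
Variables (N : seq nat -> T -> nat) (X : nat -> nat -> seq nat -> T -> seq nat).

Fixpoint line_traj (pre : seq nat) (c : nat) (v : seq nat) (w : T) : traj :=
  if v is j :: v' then
    let ys := [seq Xjk X j (N pre w) i pre w | i <- iota 1 c] in
    ((j, N pre w), ys) :: line_traj (rcons pre j) (sumn ys) v' w
  else [::].

Fixpoint in_tree (pre : seq nat) (v : seq nat) (w : T) : bool :=
  if v is j :: v' then (0 < j <= N pre w)%N && in_tree (rcons pre j) v' w else true.

Lemma Zaux_line_traj pre c v w : Zaux N X pre c v w = traj_last c (line_traj pre c v w).
Proof. by elim: v pre c => //= j v IH pre c; rewrite IH sum_index_iota1. Qed.

Lemma traj_word_line_traj pre c v w : traj_word (line_traj pre c v w) = v.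
Proof. by elim: v pre c => //= j v IH pre c; rewrite IH. Qed.

Lemma size_line_traj pre c v w : size (line_traj pre c v w) = size v.
Proof. by elim: v pre c => //= j v IH pre c; rewrite IH. Qed.

Lemma line_traj_fits pre c v w : traj_fits c (line_traj pre c v w).
Proof. by elim: v pre c => //= j v IH pre c; rewrite size_map size_iota eqxx IH. Qed.

Lemma env_ok_line_traj pre c v w : traj_env_ok (line_traj pre c v w) = in_tree pre v w.
Proof. by elim: v pre c => //= j v IH pre c; rewrite IH. Qed.

Lemma in_tree_rcons pre u j w :
  in_tree pre (rcons u j) w = in_tree pre u w && (0 < j <= N (pre ++ u) w)%N.
Proof.
elim: u pre => [|a u IH] pre /=; first by rewrite cats0 andbT.
by rewrite IH cat_rcons andbA.
Qed.

Lemma mem_gen n v w : (v \in gen N n w) = (size v == n) && in_tree [::] v w.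
Proof.
elim: n v => [|n IH] v /=; first by case: v.
case/lastP: v => [|u j].
  apply/negbTE/flatten_mapP => -[v' _] /mapP[j' _] /eqP.
  by rewrite eq_sym -size_eq0 size_rcons.
rewrite size_rcons eqSS in_tree_rcons /= andbA -IH.
apply/flatten_mapP/andP => [[u' u'g] /mapP[j' j'i] /rcons_inj[-> ->]|[ug jN]].
  by move: j'i; rewrite mem_iota add1n ltnS.
by exists u => //; apply/mapP; exists j; rewrite // mem_iota add1n ltnS.
Qed.

Lemma uniq_gen n w : uniq (gen N n w).
Proof.
elim: n => [|n IH] //=.
elim: (gen N n w) IH => [|v s IHs] //= /andP[vs us].
rewrite cat_uniq IHs // andbT map_inj_uniq ?iota_uniq //; last exact: rcons_injr.
apply/hasPn => x /flatten_mapP[v' v's] /mapP[j' _ ->].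
by apply/mapP => -[j _] /rcons_inj[ev _]; move: vs; rewrite -ev v's.
Qed.

Definition N_holds (A : seq (seq nat * nat)) w := all (fun a => N a.1 w == a.2) A.
Definition X_eq_holds (B : seq ((nat * nat * seq nat) * seq nat)) w :=
  all (fun b => X b.1.1.1 b.1.1.2 b.1.2 w == b.2) B.
Definition X_pred_holds (C : seq ((nat * nat * seq nat) * pred (seq nat))) w :=
  all (fun c => c.2 (X c.1.1.1 c.1.1.2 c.1.2 w)) C.

Lemma line_traj_eq pre c t w : traj_fits c t ->
  (line_traj pre c (traj_word t) w == t) =
  N_holds (cell_events pre t) w && X_pred_holds (vector_events pre t) w.
Proof.
elim: t pre c => [|[[j k] ys] t IH] pre c //= /andP[/eqP <- fits_t].
rewrite /N_holds /X_pred_holds /= all_cat all_map eqseq_cons !xpair_eqE eqxx /=.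
case: (N pre w =P k) => [->|_] //=.
have -> : all (fun i => nth 0%N (X k i pre w) j.-1 == nth 0%N ys i.-1) (iota 1 (size ys))
   = ([seq Xjk X j k i pre w | i <- iota 1 (size ys)] == ys).
  by rewrite eq_map_iota; apply: eq_all => i; rewrite subn1.
by case: eqP => [->|_] /=; [rewrite IH|rewrite andbF].
Qed.

Lemma X_pred_holds_cons_bigcup A B c C :
  [set w | N_holds A w && (X_eq_holds B w && X_pred_holds (c :: C) w)] =
  \bigcup_(s in [set s | c.2 s])
     [set w | N_holds A w && (X_eq_holds (rcons B (c.1, s)) w && X_pred_holds C w)].
Proof.
rewrite /X_eq_holds; apply/seteqP; split => w /=.
  move=> /and3P[NA XB /andP[Xc XC]]; exists (X c.1.1.1 c.1.1.2 c.1.2 w) => //=.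
  by rewrite NA all_rcons /= eqxx XB XC.
by move=> [s cs] /=; rewrite all_rcons /= => /and3P[-> /andP[/eqP -> ->] ->]; rewrite andbT.
Qed.

End cell_lines.

Section bwbp_laws.
Context {R : realType} {d : measure_display} {Omega : measurableType d}.
Variables (P : probability Omega R)
  (N : seq nat -> Omega -> nat) (X : nat -> nat -> seq nat -> Omega -> seq nat).
Hypothesis HM : bwbp_model P N X.
Local Open Scope ereal_scope.

Lemma fine_P_ge0 (A : set Omega) : (0 <= fine (P A))%R.
Proof. exact/fine_ge0/measure_ge0. Qed.

Lemma measurable_N_eq v m : isUH v -> measurable [set w | N v w == m].
Proof.
case: HM => [[mN _] _ _ _ _] UHv.
by rewrite (_ : [set w | _] = [set w | N v w = m]); [exact: mN|apply/seteqP; split => w /= /eqP].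
Qed.

Lemma measurable_X_eq b s : X_index_ok b -> measurable [set w | X b.1.1 b.1.2 b.2 w = s].
Proof. by case: HM => [[_ mX] _ _ _ _] /andP[i0 UHv]; exact: mX. Qed.

Lemma X_pred_bigcup b (p : pred (seq nat)) :
  [set w | p (X b.1.1 b.1.2 b.2 w)] =
  \bigcup_(s in [set s | p s]) [set w | X b.1.1 b.1.2 b.2 w = s].
Proof. by apply/seteqP; split => w /= => [pw|[s ps ->] //]; exists (X b.1.1 b.1.2 b.2 w). Qed.

Lemma measurable_X_pred b (p : pred (seq nat)) : X_index_ok b ->
  measurable [set w | p (X b.1.1 b.1.2 b.2 w)].
Proof.
by move=> ok_b; rewrite X_pred_bigcup; apply: countable_bigcup_measurable => s _; exact: measurable_X_eq.
Qed.

Lemma P_X_pred_esum b (p : pred (seq nat)) : X_index_ok b ->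
  P [set w | p (X b.1.1 b.1.2 b.2 w)] =
  \esum_(s in [set s | p s]) P [set w | X b.1.1 b.1.2 b.2 w = s].
Proof.
move=> ok_b; rewrite X_pred_bigcup countable_measure_bigcup //.
  by move=> s _; exact: measurable_X_eq.
by move=> s s' w _ _ /= -> ->.
Qed.

Lemma measurable_events A B C :
  all (fun a => isUH a.1) A -> all (fun b => X_index_ok b.1) B ->
  all (fun c => X_index_ok c.1) C ->
  measurable [set w | N_holds N A w && (X_eq_holds X B w && X_pred_holds X C w)].
Proof.
move=> UH_A ok_B ok_C; apply: measurable_andb.
  by apply: measurable_all UH_A => a; exact: measurable_N_eq.
apply: measurable_andb.
  apply: measurable_all ok_B => b ok_b.
  exact: (measurable_X_pred _ (fun s => s == b.2) ok_b).
apply: (@measurable_all _ _ _ _ _ (fun c w => c.2 (X c.1.1.1 c.1.1.2 c.1.2 w))) ok_C => c ok_c.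
exact: (measurable_X_pred _ c.2 ok_c).
Qed.

Let prod_N (A : seq (seq nat * nat)) : R :=
  \prod_(a <- A) fine (P [set w | N a.1 w = a.2]).
Let prod_X_pred (C : seq ((nat * nat * seq nat) * pred (seq nat))) : R :=
  \prod_(c <- C) fine (P [set w | c.2 (X c.1.1.1 c.1.1.2 c.1.2 w)]).

(* The independence hypothesis is stated for point events of the [X]s; it
   extends to events [{X in p}] one factor at a time, by countable additivity. *)
Lemma bwbp_indep_pred A B C :
  uniq (map fst A) -> uniq (map fst B ++ map fst C) ->
  all (fun a => isUH a.1) A -> all (fun b => X_index_ok b.1) B ->
  all (fun c => X_index_ok c.1) C ->
  P [set w | N_holds N A w && (X_eq_holds X B w && X_pred_holds X C w)] =
  (prod_N A * \prod_(b <- B) fine (P [set w | X b.1.1.1 b.1.1.2 b.1.2 w = b.2]) *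
   prod_X_pred C)%:E.
Proof.
case: (HM) => _ _ _ _ indep.
elim: C B => [|c C IH] B uA uBC UH_A ok_B /=.
  move=> _; rewrite /prod_X_pred big_nil mulr1 -indep //; last by rewrite cats0 in uBC.
  by congr (P _); apply/seteqP; split => w /=; rewrite /X_pred_holds /= andbT.
move=> /andP[ok_c ok_C].
have ok_Bs s : all (fun b => X_index_ok b.1) (rcons B (c.1, s)) by rewrite all_rcons ok_c ok_B.
rewrite X_pred_holds_cons_bigcup countable_measure_bigcup; first last.
- move=> s s' w _ _ /= /and3P[_ + _] /and3P[_ + _].
  by rewrite /X_eq_holds !all_rcons /= => /andP[/eqP <- _] /andP[/eqP <- _].
- by move=> s _; exact: measurable_events.
set pB := (\prod_(b <- B) _)%R.
have fin_Xs s : P [set w | X c.1.1.1 c.1.1.2 c.1.2 w = s] =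
    (fine (P [set w | X c.1.1.1 c.1.1.2 c.1.2 w = s]))%:E.
  by rewrite fineK // fin_num_measure //; exact: measurable_X_eq.
transitivity (\esum_(s in [set s | c.2 s])
   ((prod_N A * pB * prod_X_pred C)%:E * P [set w | X c.1.1.1 c.1.1.2 c.1.2 w = s])).
  apply: eq_esum => s _; etransitivity.
    by apply: IH => //; rewrite map_rcons cat_rcons.
  rewrite -cats1 big_cat big_seq1 /= fin_Xs -EFinM; congr (_%:E).
  by rewrite -/pB; ring.
rewrite esumZl; first last.
- by move=> s _; exact: measure_ge0.
- by rewrite !mulr_ge0 // ?prodr_ge0 // => *; exact: fine_P_ge0.
rewrite -P_X_pred_esum // -[P _]fineK; last by rewrite fin_num_measure //; exact: measurable_X_pred.
by rewrite -EFinM /prod_X_pred big_cons; congr (_%:E); ring.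
Qed.

Lemma fine_P_N v m : isUH v -> fine (P [set w | N v w = m]) = pk P N m.
Proof. by case: HM => _ _ lawN _ _ UHv; rewrite /pk lawN. Qed.

Lemma fine_P_Xjk k i v j y : (0 < i)%N -> isUH v ->
  fine (P [set w | nth 0%N (X k i v w) j.-1 == y]) = muLaw P X j k y.
Proof.
case: HM => _ _ _ lawX _ i0 UHv.
have ok_kiv : X_index_ok (k, i, v) by apply/andP.
rewrite (P_X_pred_esum _ (fun s => nth 0%N s j.-1 == y) ok_kiv).
rewrite (@eq_esum _ _ _ _ (fun s => P [set w | X k 1 [::] w = s])); last first.
  by move=> s _; exact: lawX.
rewrite -(P_X_pred_esum (k, 1%N, [::])) //.
by congr (fine (P _)); apply/seteqP; split => w /= /eqP.
Qed.

Definition traj_weight (t : traj) : R :=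
  \prod_(x <- t) (pk P N x.1.2 * \prod_(y <- x.2) muLaw P X x.1.1 x.1.2 y).

Lemma traj_weight_ge0 t : (0 <= traj_weight t)%R.
Proof.
apply: prodr_ge0 => x _; apply: mulr_ge0; first exact: fine_P_ge0.
by apply: prodr_ge0 => y _; exact: fine_P_ge0.
Qed.

Lemma prod_events_weight pre t : isUH pre -> traj_env_ok t ->
  (prod_N (cell_events pre t) * prod_X_pred (vector_events pre t))%R = traj_weight t.
Proof.
elim: t pre => [|[[j k] ys] t IH] pre UHpre.
  by rewrite /prod_N /prod_X_pred /traj_weight !big_nil mulr1.
move=> /= /andP[/andP[j0 _] okt].
have UHpre' : isUH (rcons pre j) by rewrite /isUH all_rcons j0.
rewrite /prod_N /prod_X_pred /traj_weight !big_cons big_cat /= big_map mulrACA.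
rewrite -/(traj_weight t) -(IH (rcons pre j)) //; congr (_ * _)%R.
rewrite fine_P_N //; congr (_ * _)%R.
rewrite -[in RHS](map_nth_iota1 ys) big_map; apply: eq_big_seq => i.
by rewrite mem_iota => /andP[i0 _]; rewrite fine_P_Xjk.
Qed.

Lemma line_traj_set pre c t : traj_fits c t ->
  [set w | line_traj N X pre c (traj_word t) w = t] =
  [set w | N_holds N (cell_events pre t) w &&
           (X_eq_holds X [::] w && X_pred_holds X (vector_events pre t) w)].
Proof.
move=> fits_t; apply/seteqP; split => w /=.
  by move/eqP; rewrite line_traj_eq // => /andP[-> ->].
by move=> /andP[NA XC]; apply/eqP; rewrite line_traj_eq // NA XC.
Qed.

Lemma measurable_line_traj pre c t : isUH pre -> traj_fits c t -> traj_env_ok t ->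
  measurable [set w | line_traj N X pre c (traj_word t) w = t].
Proof.
move=> UHpre fits_t okt; rewrite line_traj_set //.
by apply: measurable_events => //; [exact: UH_cell_events|exact: vector_events_index_ok].
Qed.

Lemma P_line_traj pre c t : isUH pre -> traj_fits c t -> traj_env_ok t ->
  P [set w | line_traj N X pre c (traj_word t) w = t] = (traj_weight t)%:E.
Proof.
move=> UHpre fits_t okt; rewrite line_traj_set // bwbp_indep_pred //=.
- by rewrite big_nil mulr1 prod_events_weight.
- exact: uniq_cell_events.
- exact: uniq_vector_events.
- exact: UH_cell_events.
- exact: vector_events_index_ok.
Qed.

(* Reading a cell of generation [n] along its ancestral line is a bijection
   onto the well-formed trajectories that the outcome [w] realizes. *)
Lemma count_cells_esum (Q : pred nat) z n w :
  ((count (fun v => Q (Zpar N X z v w)) (gen N n w))%:R)%:E =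
  \esum_(t in env_ok_trajs Q z n)
     (\1_([set w | line_traj N X [::] z (traj_word t) w = t]) w : R)%:E.
Proof.
set realized := [set t | line_traj N X [::] z (traj_word t) w = t].
rewrite (esumID realized); last by move=> t _; rewrite lee_fin indicE.
rewrite [X in _ + X]esum1 ?adde0; last by move=> t [_ /= nt]; rewrite indicE memNset.
rewrite (@eq_esum _ _ _ _ (fun _ => 1)); last by move=> t [_ /= et]; rewrite indicE mem_set.
set s := [seq v <- gen N n w | Q (Zpar N X z v w)].
have -> : env_ok_trajs Q z n `&` realized = (fun v => line_traj N X [::] z v w) @` [set` s].
  apply/seteqP; split => t /=.
    move=> [[/and3P[/eqP nt fits_t Qt] okt] et]; exists (traj_word t) => //.
    rewrite /s mem_filter mem_gen /Zpar Zaux_line_traj et Qt size_map nt eqxx /=.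
    by rewrite -(env_ok_line_traj N X [::] z) et.
  move=> [v]; rewrite /s mem_filter mem_gen => /and3P[Qv /eqP nv inv] <-.
  split; [split|by rewrite /realized /= traj_word_line_traj].
  - by rewrite /trajs /= size_line_traj nv eqxx line_traj_fits -Zaux_line_traj.
  - by rewrite /= env_ok_line_traj.
rewrite esum_image; last by move=> v1 v2 _ _ /(congr1 traj_word); rewrite !traj_word_line_traj.
rewrite esum_fset; [|exact: finite_seq|by []].
rewrite -fsbig_seq; last by rewrite filter_uniq // uniq_gen.
rewrite big_const_seq iter_addr addr0 -size_filter count_predT.
by elim: (size s) => // m IH; rewrite !mulrS EFinD IH.
Qed.

Lemma expect_count_cells (Q : pred nat) z n :
  \int[P]_w ((count (fun v => Q (Zpar N X z v w)) (gen N n w))%:R)%:E =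
  \esum_(t in env_ok_trajs Q z n) (traj_weight t)%:E.
Proof.
under eq_integral do rewrite count_cells_esum.
rewrite integral_esum; first last.
- by move=> t w; rewrite lee_fin indicE.
- move=> t [/and3P[_ fits_t _] okt]; apply/measurable_EFinP/measurable_indic.
  exact: measurable_line_traj.
apply: eq_esum => t [/and3P[_ fits_t _] okt].
rewrite integral_indic ?setIT //; first exact: P_line_traj.
exact: measurable_line_traj.
Qed.

End bwbp_laws.

Section abpre_paths.
Context {T : Type} (E : nat -> T -> nat * nat) (Y : nat -> nat -> T -> nat).

Fixpoint env_traj (c l m : nat) (w : T) : traj :=
  if m is m'.+1 then
    let ys := [seq Y l i w | i <- iota 1 c] in (E l w, ys) :: env_traj (sumn ys) l.+1 m' w
  else [::].

Lemma traj_last_env_traj_S c l m w :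
  traj_last c (env_traj c l m.+1 w) =
  sumn [seq Y (l + m) i w | i <- iota 1 (traj_last c (env_traj c l m w))].
Proof.
elim: m c l => [|m IH] c l; first by rewrite /= addn0.
transitivity (traj_last (sumn [seq Y l i w | i <- iota 1 c])
   (env_traj (sumn [seq Y l i w | i <- iota 1 c]) l.+1 m.+1 w)); first by [].
by rewrite IH addSnnS.
Qed.

Lemma Zprime_env_traj z n w : Zprime Y z n w = traj_last z (env_traj z 0 n w).
Proof. by elim: n => [|n IH] //; rewrite traj_last_env_traj_S -IH add0n -sum_index_iota1. Qed.

Lemma size_env_traj c l m w : size (env_traj c l m w) = m.
Proof. by elim: m c l => [|m IH] c l //=; rewrite IH. Qed.

Lemma env_traj_fits c l m w : traj_fits c (env_traj c l m w).
Proof. by elim: m c l => [|m IH] c l //=; rewrite size_map size_iota eqxx IH. Qed.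

Definition E_holds l (t : traj) w :=
  all (fun n => E (l + n) w == nth (0, 0)%N (map fst t) n) (iota 0 (size t)).

Fixpoint offspring_events (l : nat) (t : traj) : seq ((nat * nat) * nat) :=
  if t is x :: t' then
    [seq ((l, i), nth 0%N x.2 i.-1) | i <- iota 1 (size x.2)] ++ offspring_events l.+1 t'
  else [::].

Definition Y_holds l t w := all (fun s => Y s.1.1 s.1.2 w == s.2) (offspring_events l t).

Lemma E_holds_cons l x t w : E_holds l (x :: t) w = (E l w == x.1) && E_holds l.+1 t w.
Proof.
rewrite /E_holds /= addn0; congr (_ && _).
rewrite -[1%N]/(1 + 0)%N iotaDl all_map; apply: eq_all => n /=.
by rewrite add1n addnS addSn.
Qed.

Lemma env_traj_eq c l t w : traj_fits c t ->
  (env_traj c l (size t) w == t) = E_holds l t w && Y_holds l t w.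
Proof.
elim: t c l => [|[e ys] t IH] c l //= /andP[/eqP <- fits_t].
rewrite E_holds_cons /Y_holds /= all_cat all_map eqseq_cons xpair_eqE /=.
have -> : all (fun i => Y l i w == nth 0%N ys i.-1) (iota 1 (size ys))
   = ([seq Y l i w | i <- iota 1 (size ys)] == ys).
  by rewrite eq_map_iota; apply: eq_all => i; rewrite subn1.
case: (E l w == e) => //=.
by case: eqP => [->|_] /=; [rewrite IH|rewrite andbF].
Qed.

Lemma offspring_events_ge l t : all (fun s => l <= s.1.1)%N (offspring_events l t).
Proof.
elim: t l => [|x t IH] l //=; rewrite all_cat all_map.
apply/andP; split; first by apply/allP => i _ /=.
by apply: sub_all (IH l.+1) => s /= /ltnW.
Qed.

Lemma offspring_events_index l t :
  all (fun s => (s.1.1 < l + size t)%N && (0 < s.1.2)%N) (offspring_events l t).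
Proof.
elim: t l => [|x t IH] l //=; rewrite all_cat all_map.
apply/andP; split.
  by apply/allP => i; rewrite mem_iota /= addnS ltnS leq_addr => /andP[].
by apply: sub_all (IH l.+1) => s /=; rewrite addSnnS.
Qed.

Lemma uniq_offspring_events l t : uniq (map fst (offspring_events l t)).
Proof.
elim: t l => [|x t IH] l //=; rewrite map_cat cat_uniq IH andbT.
rewrite -map_comp map_inj_uniq ?iota_uniq; last by move=> i1 i2 [].
apply/hasPn => b /mapP[s sS ->]; apply/mapP => -[i _ /= es].
by have := allP (offspring_events_ge l.+1 t) s sS; rewrite es ltnn.
Qed.

End abpre_paths.

Section abpre_laws.
Context {R : realType} {d : measure_display} {Omega : measurableType d}.
Context {P : probability Omega R}
  {N : seq nat -> Omega -> nat} {X : nat -> nat -> seq nat -> Omega -> seq nat} {nu : R}.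
Context {d' : measure_display} {Omega' : measurableType d'} {P' : probability Omega' R}
  {E : nat -> Omega' -> nat * nat} {Y : nat -> nat -> Omega' -> nat}.
Hypothesis HA : abpre_model P N X nu P' E Y.
Local Open Scope ereal_scope.

Definition env_traj_weight (t : traj) : R :=
  \prod_(x <- t) (envProb P N nu x.1 * \prod_(y <- x.2) muLaw P X x.1.1 x.1.2 y).

Lemma prod_offspring_events l e0 t : size e0 = l ->
  (\prod_(s <- offspring_events l t)
     muLaw P X (nth (0, 0)%N (e0 ++ map fst t) s.1.1).1
               (nth (0, 0)%N (e0 ++ map fst t) s.1.1).2 s.2)%R =
  (\prod_(x <- t) \prod_(y <- x.2) muLaw P X x.1.1 x.1.2 y)%R.
Proof.
elim: t l e0 => [|[e ys] t IH] l e0 e0l; first by rewrite !big_nil.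
rewrite /= big_cat big_map big_cons /= -cat_rcons (IH l.+1); last by rewrite size_rcons e0l.
congr (_ * _)%R; rewrite -[in RHS](map_nth_iota1 ys) big_map; apply: eq_bigr => i _ /=.
by rewrite cat_rcons nth_cat e0l ltnn subnn.
Qed.

Lemma env_traj_set z t : traj_fits z t ->
  [set w | env_traj E Y z 0 (size t) w = t] = [set w | E_holds E 0 t w && Y_holds Y 0 t w].
Proof.
move=> fits_t; apply/seteqP; split => w /=; first by move/eqP; rewrite env_traj_eq.
by move=> Ht; apply/eqP; rewrite env_traj_eq.
Qed.

Lemma measurable_env_traj z t : traj_fits z t ->
  measurable [set w | env_traj E Y z 0 (size t) w = t].
Proof.
case: HA => mE mY _ fits_t; rewrite env_traj_set //; apply: measurable_andb.
  apply: (@measurable_all _ _ _ xpredT) (all_predT _) => n _.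
  by rewrite (_ : [set w | _] = [set w | E (0 + n)%N w = nth (0, 0)%N (map fst t) n]);
    [exact: mE|apply/seteqP; split => w /= /eqP].
apply: (@measurable_all _ _ _ (fun s => (0 < s.1.2)%N)).
  move=> s s0; rewrite (_ : [set w | _] = [set w | Y s.1.1 s.1.2 w = s.2]).
    exact: mY.
  by apply/seteqP; split => w /= /eqP.
by apply: sub_all (offspring_events_index 0 t) => s /andP[].
Qed.

Lemma P'_env_traj z t : traj_fits z t ->
  P' [set w | env_traj E Y z 0 (size t) w = t] = (env_traj_weight t)%:E.
Proof.
case: HA => _ _ law fits_t; rewrite env_traj_set //.
have := law (map fst t) (offspring_events 0 t) (uniq_offspring_events 0 t).
rewrite size_map => ->; last by apply: sub_all (offspring_events_index 0 t) => s /andP[-> ->].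
by rewrite (prod_offspring_events 0 [::]) // big_map -big_split.
Qed.

Lemma P'_Zprime_esum (Q : pred nat) z n :
  P' [set w | Q (Zprime Y z n w)] = \esum_(t in trajs Q z n) (env_traj_weight t)%:E.
Proof.
have -> : [set w | Q (Zprime Y z n w)] =
    \bigcup_(t in trajs Q z n) [set w | env_traj E Y z 0 (size t) w = t].
  apply/seteqP; split => w /=.
    move=> Qw; exists (env_traj E Y z 0 n w); last by rewrite size_env_traj.
    by rewrite /trajs /= size_env_traj eqxx env_traj_fits -(Zprime_env_traj E).
  by move=> [t /and3P[/eqP nt _ Qt] et]; rewrite (Zprime_env_traj E) -nt et.
rewrite countable_measure_bigcup; first last.
- move=> t t' w /and3P[/eqP nt _ _] /and3P[/eqP nt' _ _] /=.
  by rewrite nt nt' => <- <-.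
- by move=> t /and3P[_ fits_t _]; exact: measurable_env_traj.
by apply: eq_esum => t /and3P[_ fits_t _]; exact: P'_env_traj.
Qed.

Lemma env_traj_weightE t :
  env_traj_weight t = if traj_env_ok t then (nu ^- size t * traj_weight P N X t)%R else 0%R.
Proof.
elim: t => [|[[j k] ys] t IH].
  by rewrite /env_traj_weight /traj_weight !big_nil /= expr0 invr1 mulr1.
rewrite /env_traj_weight big_cons -/(env_traj_weight t) IH /envProb /traj_env_ok /=.
case: (0 < j <= k)%N => /=; last by rewrite !mul0r.
case: (all _ t); last by rewrite mulr0.
by rewrite /traj_weight big_cons /= -/(traj_weight P N X t) exprS invfM; ring.
Qed.

Lemma P'_Zprime_expect_count (HM : bwbp_model P N X) (nu_ge0 : (0 <= nu)%R) (Q : pred nat) z n :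
  P' [set w | Q (Zprime Y z n w)] =
  (nu ^- n)%:E * \int[P]_w ((count (fun v => Q (Zpar N X z v w)) (gen N n w))%:R)%:E.
Proof.
have weight_ge0 t : (0 <= traj_weight P N X t)%R by exact: traj_weight_ge0.
rewrite P'_Zprime_esum expect_count_cells // (esumID [set t | traj_env_ok t]); last first.
  move=> t _; rewrite lee_fin env_traj_weightE; case: ifP => // _.
  by rewrite mulr_ge0 // invr_ge0 exprn_ge0.
rewrite [X in _ + X]esum1 ?adde0; last first.
  by move=> t [_ /= /negP/negbTE okt]; rewrite env_traj_weightE okt.
rewrite -esumZl; [|by rewrite invr_ge0 exprn_ge0|by move=> t _; rewrite lee_fin].
by apply: eq_esum => t [/and3P[/eqP <- _ _] /= okt]; rewrite env_traj_weightE okt EFinM.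
Qed.

End abpre_laws.

Local Open Scope ereal_scope.

Theorem proposition1 (R : realType)
  (d : measure_display) (Omega : measurableType d) (P : probability Omega R)
  (N : seq nat -> Omega -> nat) (X : nat -> nat -> seq nat -> Omega -> seq nat)
  (nu : R)
  (d' : measure_display) (Omega' : measurableType d') (P' : probability Omega' R)
  (E : nat -> Omega' -> nat * nat) (Y : nat -> nat -> Omega' -> nat) :
  bwbp_model P N X ->
  has_mean P N nu ->
  standing_assumptions P N X ->
  abpre_model P N X nu P' E Y ->
  forall n k z : nat,
    P' [set w | Zprime Y z n w = k] =
      (nu ^- n)%:E * \int[P]_w ((Tnk N X z n k w)%:R)%:E /\
    P' [set w | (0 < Zprime Y z n w)%N] =
      (nu ^- n)%:E * \int[P]_w ((Tstar N X z n w)%:R)%:E.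
Proof.
move=> HM mean_nu _ HA n k z; rewrite /Tstar.
have nu_ge0 : (0 <= nu)%R.
  by rewrite -lee_fin -mean_nu; apply: integral_ge0 => w _; rewrite lee_fin.
split; last exact: (P'_Zprime_expect_count HA HM nu_ge0 (fun m => 0 < m)%N).
rewrite /Tnk -(P'_Zprime_expect_count HA HM nu_ge0 (pred1 k)).
by congr (P' _); apply/seteqP; split => w /= /eqP.
Qed.
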